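(* Let $L$ be a finite-dimensional simple regular Lie algebra of rank $1$ over an infinite field $K$, admitting a nondegenerate symmetric invariant bilinear form. Then every element of $L$ is a commutator, i.e. for every $x\in L$ there exist $y,z\in L$ with $x=[y,z]$.
   Context: For $x\in L$ write $\chi_{\operatorname{ad} x}(t)=\det(t-\operatorname{ad}x)=\sum_{i}a_i(x)t^i$; the rank $\operatorname{rk}L$ is the minimal $r$ with $a_r(x)\neq0$ for some $x$; $x$ is regular if $a_{\operatorname{rk}L}(x)\neq 0$; $L$ is regular if every nonzero element is regular. A bilinear form is invariant if $\langle[x,y],z\rangle=\langle x,[y,z]\rangle$ for all $x,y,z$. *)

From HB Require Import structures.
From mathcomp Require Import all_boot all_order all_algebra.
Set Implicit Arguments. Unset Strict Implicit. Unset Printing Implicit Defensive.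
Import Order.TTheory GRing.Theory Num.Theory.
Local Open Scope ring_scope.

Section Lie.
Variables (K : fieldType) (L : vectType K).

Definition lie_bracket (br : L -> L -> L) : Prop :=
  [/\ (forall (a : K) x y z, br (a *: x + y) z = a *: br x z + br y z),
      (forall (a : K) x y z, br x (a *: y + z) = a *: br x y + br x z),
      (forall x, br x x = 0) &
      (forall x y z, br x (br y z) + br y (br z x) + br z (br x y) = 0)].

(* Matrix of ad x = [x, -] w.r.t. the basis vbasis fullv of L
   (br x is linear by lie_bracket, so linfun (br x) is ad x). *)
Definition ad_mx (br : L -> L -> L) (x : L) : 'M[K]_(\dim {:L}) :=
  passmx.mxof (vbasis fullv) (vbasis fullv) (linfun (br x)).

Definition ad_coef (br : L -> L -> L) (i : nat) (x : L) : K :=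
  (char_poly (ad_mx br x))`_i.

Definition lie_rank (br : L -> L -> L) (r : nat) : Prop :=
  (exists x, ad_coef br r x != 0) /\
  (forall i x, (i < r)%N -> ad_coef br i x = 0).

Definition regular_elt (br : L -> L -> L) (x : L) : Prop :=
  forall r, lie_rank br r -> ad_coef br r x != 0.

Definition regular_lie (br : L -> L -> L) : Prop :=
  forall x : L, x != 0 -> regular_elt br x.

Definition lie_ideal (br : L -> L -> L) (I : {vspace L}) : Prop :=
  forall x y, y \in I -> br x y \in I.

Definition simple_lie (br : L -> L -> L) : Prop :=
  (exists x y, br x y != 0) /\
  (forall I : {vspace L}, lie_ideal br I -> I = 0%VS \/ I = fullv).

Definition nondeg_sym_invariant_form (br : L -> L -> L) (B : L -> L -> K) : Prop :=
  [/\ (forall (a : K) x y z, B (a *: x + y) z = a * B x z + B y z),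
      (forall x y, B x y = B y x),
      (forall x y z, B (br x y) z = B x (br y z)) &
      (forall x, (forall y, B x y = 0) -> x = 0)].

End Lie.

Definition infinite_field (K : fieldType) : Prop :=
  forall s : seq K, exists x : K, x \notin s.

(* Given x, pick y != 0 with B(y, x) = 0 (possible since L is non-abelian,
   hence of dimension >= 2).  As L is regular of rank 1, the coefficient
   a_1(y) of t in det(t - ad y) is nonzero; a matrix of corank >= 2 has
   vanishing a_1, so ad y has corank <= 1.  By invariance, [y, L] is
   orthogonal to y; if x were not in [y, L] we would get L = [y, L] + K x,
   all orthogonal to y, contradicting nondegeneracy.  Hence x = [y, u]. *)

From HB Require Import structures.
From mathcomp Require Import all_boot all_order all_algebra.
From mathcomp Require Import fingroup perm zify.
Import GRing.Theory.
Local Open Scope ring_scope.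
Set Implicit Arguments.
Unset Strict Implicit.

(* The coefficient of t in det(t - A) vanishes as soon as A has two zero rows:
   every term of the Leibniz expansion then contains the factor t twice. *)
Lemma char_poly_coef1_two_zero_rows (R : comNzRingType) n (A : 'M[R]_n)
    (i0 i1 : 'I_n) :
  i0 != i1 -> row i0 A = 0 -> row i1 A = 0 -> (char_poly A)`_1 = 0.
Proof.
move=> ne_i A_i0 A_i1.
have entry i j : row i A = 0 -> char_poly_mx A i j = 'X *+ (i == j).
  move=> A_i; have Aij0 : A i j = 0.
    by have := congr1 (fun r : 'rV_n => r 0 j) A_i; rewrite !mxE.
  by rewrite !mxE Aij0 subr0.
rewrite /char_poly /determinant coef_sum big1 // => s _.
have [/eqP s_i0|s_i0] := boolP (s i0 == i0); last first.
  by rewrite (bigD1 i0) //= entry // eq_sym (negPf s_i0) mulr0n mul0r mulr0 coef0.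
have [/eqP s_i1|s_i1] := boolP (s i1 == i1); last first.
  by rewrite (bigD1 i1) //= entry // eq_sym (negPf s_i1) mulr0n mul0r mulr0 coef0.
rewrite (bigD1 i0) //= (bigD1 i1) /=; last by rewrite eq_sym.
rewrite !entry // s_i0 s_i1 !eqxx !mulr1n; set r := \prod_(_ | _) _.
by rewrite mulrCA [_ * ('X * r)]mulrCA mulrA coefXM /= -!mulrA coefXM.
Qed.

Lemma char_poly_conj (F : fieldType) n (A P : 'M[F]_n) : P \in unitmx ->
  char_poly (P *m A *m invmx P) = char_poly A.
Proof.
move=> P_unit; set mP := map_mx polyC P; set mQ := map_mx polyC (invmx P).
have PQ : mP *m mQ = 1%:M by rewrite -map_mxM mulmxV // map_mx1.
have QP : mQ *m mP = 1%:M by rewrite -map_mxM mulVmx // map_mx1.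
rewrite /char_poly.
have -> : char_poly_mx (P *m A *m invmx P) = mP *m char_poly_mx A *m mQ.
  rewrite /char_poly_mx !map_mxM mulmxBr mulmxBl -/mP -/mQ.
  by rewrite scalar_mxC -(mulmxA _%:M) PQ mulmx1.
by rewrite !det_mulmx mulrC mulrA -det_mulmx QP det1 mul1r.
Qed.

(* A matrix of corank at least 2 has a vanishing coefficient of t in its
   characteristic polynomial: it is similar to a matrix with \rank A nonzero
   rows, via the Gaussian elimination A = col_ebase A * pid_mx r * row_ebase A. *)
Lemma char_poly_coef1_low_rank (F : fieldType) n (A : 'M[F]_n) :
  (\rank A + 2 <= n)%N -> (char_poly A)`_1 = 0.
Proof.
move=> low_rank; have C_unit := col_ebase_unit A.
rewrite -(@char_poly_conj F n A (invmx (col_ebase A))) ?unitmx_inv // invmxK.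
have -> : invmx (col_ebase A) *m A *m col_ebase A =
    pid_mx (\rank A) *m (row_ebase A *m col_ebase A).
  by rewrite -{2}(mulmx_ebase A) !mulmxA mulVmx // mul1mx.
have zero_row (i : 'I_n) : (\rank A <= i)%N ->
    row i (pid_mx (\rank A) *m (row_ebase A *m col_ebase A)) = 0.
  move=> le_r_i; rewrite row_mul.
  have -> : row i (pid_mx (\rank A) : 'M[F]_n) = 0.
    by apply/rowP => j; rewrite !mxE ltnNge le_r_i andbF.
  by rewrite mul0mx.
have lt_n2 : (n - 2 < n)%N by lia.
have lt_n1 : (n - 1 < n)%N by lia.
apply: (@char_poly_coef1_two_zero_rows _ n _ (Ordinal lt_n2) (Ordinal lt_n1)).
- by rewrite -(inj_eq val_inj) /=; apply/eqP; lia.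
- by apply: zero_row => /=; lia.
- by apply: zero_row => /=; lia.
Qed.

Lemma addsmx_full_corank1 (F : fieldType) m n (M : 'M[F]_(m, n)) (v : 'rV_n) :
  (n <= \rank M + 1)%N -> ~~ (v <= M)%MS -> row_full (M + v)%MS.
Proof.
move=> corank1 v_notin_M.
have M_lt : (M < M + v)%MS.
  rewrite ltmxE addsmxSl /=; apply: contra v_notin_M => sub_vM.
  exact: submx_trans (addsmxSr M v) sub_vM.
move: M_lt; rewrite ltmxErank => /andP[_ rank_lt].
by rewrite /row_full eqn_leq rank_leq_col /=; lia.
Qed.

Section LieBracket.
Variables (K : fieldType) (L : vectType K) (br : L -> L -> L).
Hypothesis br_lie : lie_bracket br.

Lemma bracket_linear_r (y : L) : linear (br y).
Proof. by case: br_lie => _ lin_r _ _ a u v; apply: lin_r. Qed.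

Lemma bracket_linear_l (z : L) : linear (br^~ z).
Proof. by case: br_lie => lin_l _ _ _ a u v; apply: lin_l. Qed.

Definition ad (y : L) : {linear L -> L} :=
  HB.pack (br y) (GRing.isLinear.Build K L L _ (br y) (bracket_linear_r y)).

Definition ad_right (z : L) : {linear L -> L} :=
  HB.pack (br^~ z) (GRing.isLinear.Build K L L _ (br^~ z) (bracket_linear_l z)).

Lemma bracket0l (z : L) : br 0 z = 0.
Proof. exact: (raddf0 (ad_right z)). Qed.

Lemma bracketZr (a : K) (u v : L) : br u (a *: v) = a *: br u v.
Proof. exact: (linearZZ (ad u)). Qed.

Let e := vbasis (fullv : {vspace L}).

Lemma ad_mxE (y : L) (u : 'rV_(\dim {:L})) :
  u *m ad_mx br y = passmx.rVof e (br y (passmx.vecof e u)).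
Proof. by rewrite /ad_mx passmx.mul_mxof (lfunE (ad y)). Qed.

(* In a Lie algebra of rank 1, ad y has corank at most 1 for every regular y,
   since a_1(y) != 0 is incompatible with corank >= 2. *)
Lemma regular_ad_corank1 (y : L) :
  lie_rank br 1 -> regular_elt br y -> (\dim {:L} <= \rank (ad_mx br y) + 1)%N.
Proof.
move=> rank1 /(_ 1 rank1); rewrite /ad_coef.
case: (leqP (\rank (ad_mx br y) + 2) (\dim {:L})) => [low|high _].
  by rewrite char_poly_coef1_low_rank ?eqxx.
by lia.
Qed.

Lemma ad_image_or_complement (y x : L) :
  (\dim {:L} <= \rank (ad_mx br y) + 1)%N ->
  (exists u, x = br y u) \/ (forall z, exists (u : L) (c : K), z = br y u + c *: x).
Proof.
move=> corank1; have e_basis : basis_of fullv e := vbasisP fullv.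
have rVof_inj := can_inj (passmx.rVofK e_basis).
have [/submxP[u def_x]|x_notin] := boolP (passmx.rVof e x <= ad_mx br y)%MS.
  by left; exists (passmx.vecof e u); apply: rVof_inj; rewrite def_x ad_mxE.
right=> z.
have := submx_full (passmx.rVof e z) (addsmx_full_corank1 corank1 x_notin).
case/sub_addsmxP => [[u c]] /= def_z.
exists (passmx.vecof e u), (c 0 0); apply: rVof_inj.
rewrite addrC passmx.rVof_linear -ad_mxE def_z addrC.
by rewrite {1}[c]mx11_scalar mul_scalar_mx.
Qed.

End LieBracket.

Section InvariantForm.
Variables (K : fieldType) (L : vectType K) (br : L -> L -> L) (B : L -> L -> K).
Hypothesis br_lie : lie_bracket br.
Hypothesis B_form : nondeg_sym_invariant_form br B.

Lemma form_linear_l (z : L) : linear (B^~ z : L -> K^o).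
Proof. by case: B_form => lin_l _ _ _ a u v; apply: lin_l. Qed.

Definition form_l (z : L) : {linear L -> K^o} :=
  HB.pack (B^~ z : L -> K^o)
    (GRing.isLinear.Build K L K^o _ (B^~ z : L -> K^o) (form_linear_l z)).

Lemma form0l (z : L) : B 0 z = 0.
Proof. exact: (raddf0 (form_l z)). Qed.

Lemma formBl (u v z : L) : B (u - v) z = B u z - B v z.
Proof. exact: (raddfB (form_l z)). Qed.

Lemma formDl (u v z : L) : B (u + v) z = B u z + B v z.
Proof. exact: (raddfD (form_l z)). Qed.

Lemma formZl (a : K) (u z : L) : B (a *: u) z = a * B u z.
Proof. exact: (linearZZ (form_l z)). Qed.

(* By invariance, y is orthogonal to the image of ad y:
   B(y, [y, u]) = B([y, y], u) = 0. *)
Lemma form_ad_image_orthogonal (y u : L) : B y (br y u) = 0.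
Proof.
case: br_lie B_form => _ _ alt _ [_ _ inv _].
by rewrite -inv alt form0l.
Qed.

(* In a non-abelian algebra (so dim L >= 2), every x has a nonzero orthogonal
   vector: given [a, b] != 0, a and b are independent and a suitable
   combination of them is orthogonal to x. *)
Lemma exists_orthogonal_nonzero (x : L) :
  (exists a b, br a b != 0) -> exists y, y != 0 /\ B y x = 0.
Proof.
case=> a [b nab].
have a_nz : a != 0 by apply: contraNneq nab => ->; rewrite bracket0l.
have [ax0|ax_nz] := eqVneq (B a x) 0; first by exists a.
exists (B b x *: a - B a x *: b); split.
  apply: contraNneq nab => /eqP; rewrite subr_eq0 => /eqP comb.
  have -> : b = ((B a x)^-1 * B b x) *: a.
    by rewrite -scalerA comb scalerA mulVf // scale1r.
  by case: br_lie => _ _ alt _; rewrite bracketZr // alt scaler0.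
by rewrite formBl !formZl mulrC subrr.
Qed.

(* Key step: if ad y (y != 0) has corank at most 1, its image is exactly the
   orthogonal complement of y.  Otherwise L = [y, L] + K x with x orthogonal
   to y, so y would be orthogonal to all of L, contradicting nondegeneracy. *)
Lemma orthogonal_in_ad_image (y x : L) :
  (\dim {:L} <= \rank (ad_mx br y) + 1)%N -> y != 0 -> B y x = 0 ->
  exists u, x = br y u.
Proof.
move=> corank1 y_nz yx0.
have [//|spans] := ad_image_or_complement br_lie x corank1.
case: B_form => _ B_sym _ B_nondeg.
suff y_perp : forall z, B y z = 0 by rewrite (B_nondeg y y_perp) eqxx in y_nz.
move=> z; have [u [c ->]] := spans z.
rewrite B_sym formDl formZl B_sym form_ad_image_orthogonal B_sym yx0.
by rewrite mulr0 addr0.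
Qed.
End InvariantForm.

Unset Implicit Arguments.

Theorem lemma12 (K : fieldType) (L : vectType K) (br : L -> L -> L) (B : L -> L -> K) :
  infinite_field K ->
  lie_bracket br ->
  simple_lie br ->
  regular_lie br ->
  lie_rank br 1 ->
  nondeg_sym_invariant_form br B ->
  forall x : L, exists y z : L, x = br y z.
Proof.
move=> _ br_lie [non_abelian _] regular rank1 B_form x.
have [y [y_nz yx0]] := exists_orthogonal_nonzero br_lie B_form x non_abelian.
have corank1 := regular_ad_corank1 rank1 (regular y y_nz).
have [u def_x] := orthogonal_in_ad_image br_lie B_form corank1 y_nz yx0.
by exists y, u.
Qed.
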